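(* Let $d_1$ and $d_2$ be two metrics on the same set $X$. The following three statements are equivalent: (i) the set of sequences in $X$ that are $d_1$-statistically convergent coincides with the set of sequences in $X$ that are $d_2$-statistically convergent; (ii) the set of sequences that converge in $(X,d_1)$ coincides with the set of sequences that converge in $(X,d_2)$; (iii) $d_1$ and $d_2$ induce the same topology on $X$.
   Context: For a metric $d$ on $X$, a sequence $(x_n)$ of points of $X$ is $d$-statistically convergent to $a\in X$ if for every $\epsilon>0$, $\lim_{n\to\infty}\frac{1}{n}\left|\{k: k\le n,\ d(x_k,a)\ge\epsilon\}\right|=0$ ($|B|$ is the cardinality of $B$); it is $d$-statistically convergent if it is $d$-statistically convergent to some point of $X$. *)

From Stdlib Require Import Reals Lra List.
Open Scope R_scope.

Definition is_metric {X : Type} (d : X -> X -> R) : Prop :=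
  (forall x y, 0 <= d x y) /\
  (forall x y, d x y = 0 <-> x = y) /\
  (forall x y, d x y = d y x) /\
  (forall x y z, d x z <= d x y + d y z).

(* number of k in {0,...,n-1} with d (x k) a >= eps.
   Sequences are indexed from 0: x k stands for the paper's x_{k+1}, so this is
   |{k : 1 <= k <= n, d(x_k, a) >= eps}|. *)
Definition bad_count {X : Type} (d : X -> X -> R) (x : nat -> X) (a : X)
  (eps : R) (n : nat) : nat :=
  length (filter (fun k => if Rle_dec eps (d (x k) a) then true else false)
                 (seq 0 n)).

Definition stat_conv_to {X : Type} (d : X -> X -> R) (x : nat -> X) (a : X) : Prop :=
  forall eps, 0 < eps ->
    Un_cv (fun n => INR (bad_count d x a eps n) / INR n) 0.

Definition stat_convergent {X : Type} (d : X -> X -> R) (x : nat -> X) : Prop :=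
  exists a, stat_conv_to d x a.

Definition metric_conv_to {X : Type} (d : X -> X -> R) (x : nat -> X) (a : X) : Prop :=
  forall eps, 0 < eps -> exists N : nat, forall n, (N <= n)%nat -> d (x n) a < eps.

Definition metric_convergent {X : Type} (d : X -> X -> R) (x : nat -> X) : Prop :=
  exists a, metric_conv_to d x a.

Definition metric_open {X : Type} (d : X -> X -> R) (U : X -> Prop) : Prop :=
  forall x, U x -> exists r, 0 < r /\ forall y, d x y < r -> U y.

Definition same_topology {X : Type} (d1 d2 : X -> X -> R) : Prop :=
  forall U : X -> Prop, metric_open d1 U <-> metric_open d2 U.

From Stdlib Require Import Reals Lra Lia List Classical ClassicalEpsilon.
Open Scope R_scope.

(* Metric convergence implies statistical convergence, and both kinds of
   convergence pass from d1 to d2 when the d2-topology is coarser, since every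
   d2-ball about a point then contains a d1-ball about it.
   Conversely, let a be a point of a d1-open set U containing no d2-ball about a,
   and pick y k outside U with d2 a (y k) < 1/(k+1).  The sequence
   a, y 1, a, y 3, ... d2-converges to a, but its even and odd terms stay
   d1-apart by some r > 0, so of any two consecutive terms one is r/2-far from
   any candidate limit b: at least half of the terms are bad, and the sequence is
   not even d1-statistically convergent. *)

Lemma Un_cv_0_squeeze (u v : nat -> R) :
  (forall n, 0 <= u n <= v n) -> Un_cv v 0 -> Un_cv u 0.
Proof.
  intros Huv Hv e He. destruct (Hv e He) as [N HN]. exists N. intros n Hn.
  specialize (HN n Hn). specialize (Huv n). unfold R_dist in *.
  rewrite Rminus_0_r in *. rewrite Rabs_pos_eq in HN by lra.
  rewrite Rabs_pos_eq by lra. lra.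
Qed.

Lemma Rinv_INR_ge0 n : 0 <= / INR n.
Proof.
  destruct n as [|n]; [simpl; rewrite Rinv_0; lra|].
  left; apply Rinv_0_lt_compat, lt_0_INR; lia.
Qed.

Lemma INR_div_ge0 m n : 0 <= INR m / INR n.
Proof. apply Rmult_le_pos; [apply pos_INR | apply Rinv_INR_ge0]. Qed.

Lemma INR_div_le m m' n : (m <= m')%nat -> INR m / INR n <= INR m' / INR n.
Proof. intros. apply Rmult_le_compat_r; [apply Rinv_INR_ge0 | apply le_INR; lia]. Qed.

Lemma Un_cv_INR_div N : Un_cv (fun n => INR N / INR n) 0.
Proof.
  intros e He. destruct (INR_archimed e (INR N) He) as [M HM]. exists (S M).
  intros n Hn. unfold R_dist. rewrite Rminus_0_r, Rabs_pos_eq by apply INR_div_ge0.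
  apply le_INR in Hn. rewrite S_INR in Hn. pose proof (pos_INR M).
  apply Rmult_lt_reg_r with (INR n); [lra|]. unfold Rdiv.
  rewrite Rmult_assoc, Rinv_l, Rmult_1_r by lra. nra.
Qed.

Section BadCount.
Variable X : Type.
Implicit Types (d : X -> X -> R) (x : nat -> X).

Lemma bad_count_S d x a e n :
  bad_count d x a e (S n) =
  (bad_count d x a e n + if Rle_dec e (d (x n) a) then 1 else 0)%nat.
Proof.
  unfold bad_count. rewrite seq_S, filter_app, length_app. simpl.
  destruct Rle_dec; simpl; lia.
Qed.

Lemma bad_count_le d x a e n : (bad_count d x a e n <= n)%nat.
Proof.
  induction n as [|n IH]; [reflexivity|].
  rewrite bad_count_S. destruct Rle_dec; lia.
Qed.

Lemma bad_count_mono d d' x x' a a' e e' n :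
  (forall k, e <= d (x k) a -> e' <= d' (x' k) a') ->
  (bad_count d x a e n <= bad_count d' x' a' e' n)%nat.
Proof.
  intros Himpl. induction n as [|n IH]; [reflexivity|].
  rewrite !bad_count_S.
  destruct (Rle_dec e (d (x n) a)) as [Hn|]; [|lia].
  destruct (Rle_dec e' (d' (x' n) a')) as [|Hn']; [lia|].
  exfalso. exact (Hn' (Himpl n Hn)).
Qed.

Lemma bad_count_le_eventually d x a e N n :
  (forall k, (N <= k)%nat -> d (x k) a < e) -> (bad_count d x a e n <= N)%nat.
Proof.
  intros HN. induction n as [|n IH]; [apply Nat.le_0_l|].
  rewrite bad_count_S. destruct Rle_dec as [Hn|]; [|lia].
  destruct (Compare_dec.le_lt_dec N n) as [HNn|HnN].
  - specialize (HN n HNn). lra.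
  - pose proof (bad_count_le d x a e n). lia.
Qed.

(* Induction on the pair (n, n+1), since the hypothesis only controls pairs. *)
Lemma bad_count_consecutive d x a e :
  (forall k, e <= d (x k) a \/ e <= d (x (S k)) a) ->
  forall n, (n <= 2 * bad_count d x a e n + 1)%nat.
Proof.
  intros Hpair.
  enough (Hboth : forall n, (n <= 2 * bad_count d x a e n + 1)%nat /\
                            (S n <= 2 * bad_count d x a e (S n) + 1)%nat)
    by (intro n; apply Hboth).
  induction n as [|n [IHn IHSn]]; [split; lia|].
  split; [exact IHSn|]. rewrite !bad_count_S.
  destruct (Hpair n), (Rle_dec e (d (x n) a)), (Rle_dec e (d (x (S n)) a));
    first [lra | lia].
Qed.

Lemma metric_conv_to_stat_conv_to d x a :
  metric_conv_to d x a -> stat_conv_to d x a.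
Proof.
  intros Hx e He. destruct (Hx e He) as [N HN].
  apply Un_cv_0_squeeze with (fun n => INR N / INR n); [|apply Un_cv_INR_div].
  intro n. split; [apply INR_div_ge0|].
  apply INR_div_le, bad_count_le_eventually, HN.
Qed.

(* Evaluating the density at n = N + 2 gives at least (n - 1) / 2n >= 1/4. *)
Lemma not_stat_conv_to_consecutive d x a e : 0 < e ->
  (forall k, e <= d (x k) a \/ e <= d (x (S k)) a) -> ~ stat_conv_to d x a.
Proof.
  intros He Hpair Hstat. destruct (Hstat e He (/4) ltac:(lra)) as [N HN].
  specialize (HN (N + 2)%nat ltac:(lia)).
  unfold R_dist in HN. rewrite Rminus_0_r, Rabs_pos_eq in HN by apply INR_div_ge0.
  pose proof (bad_count_consecutive d x a e Hpair (N + 2)) as Hhalf.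
  assert (H4 : (N + 2 <= 4 * bad_count d x a e (N + 2))%nat) by lia.
  apply le_INR in H4. rewrite mult_INR in H4. replace (INR 4) with 4 in H4 by (simpl; lra).
  assert (Hpos : 0 < INR (N + 2)) by (apply lt_0_INR; lia).
  apply Rmult_lt_compat_r with (r := INR (N + 2)) in HN; [|exact Hpos].
  unfold Rdiv in HN. rewrite Rmult_assoc, Rinv_l, Rmult_1_r in HN by lra.
  lra.
Qed.

End BadCount.

Section Interleave.
Variable X : Type.
Variable d : X -> X -> R.
Hypothesis Hd : is_metric d.

Definition interleave (a : X) (y : nat -> X) (k : nat) : X :=
  if Nat.even k then a else y k.

Lemma interleave_conv_to a y :
  (forall k, d a (y k) < / (INR k + 1)) -> metric_conv_to d (interleave a y) a.
Proof.
  destruct Hd as [_ [Hzero [Hsym _]]].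
  intros Hy e He. destruct (archimed_cor1 e He) as [N [HN HN0]]. exists N.
  intros n Hn. unfold interleave. destruct (Nat.even n).
  - rewrite (proj2 (Hzero a a) eq_refl). lra.
  - rewrite Hsym. eapply Rlt_le_trans; [apply Hy|].
    assert (0 < INR N) by (apply lt_0_INR; lia). apply le_INR in Hn.
    enough (/ (INR n + 1) <= / INR N) by lra.
    apply Rinv_le_contravar; lra.
Qed.

(* Either a is r/2-far from b, making every even term far, or by the triangle
   inequality every y j is. *)
Lemma interleave_consecutive_far a y r b :
  (forall k, r <= d a (y k)) ->
  forall k, r / 2 <= d (interleave a y k) b \/ r / 2 <= d (interleave a y (S k)) b.
Proof.
  destruct Hd as [_ [_ [Hsym Htri]]].
  intros Hy k. unfold interleave. rewrite Nat.even_succ, <- Nat.negb_even.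
  destruct (Rle_dec (r / 2) (d a b)) as [Hab|Hab].
  - destruct (Nat.even k); simpl; auto.
  - assert (Hyb : forall j, r / 2 <= d (y j) b).
    { intro j. pose proof (Htri a b (y j)). pose proof (Hy j).
      rewrite (Hsym b (y j)) in *. lra. }
    destruct (Nat.even k); simpl; auto.
Qed.

Lemma interleave_not_stat_convergent a y r : 0 < r ->
  (forall k, r <= d a (y k)) -> ~ stat_convergent d (interleave a y).
Proof.
  intros Hr Hy [b Hb].
  apply (not_stat_conv_to_consecutive X d (interleave a y) b (r / 2)); [lra| |exact Hb].
  exact (interleave_consecutive_far a y r b Hy).
Qed.

End Interleave.

Section Topology.
Variable X : Type.
Implicit Types (d : X -> X -> R) (U : X -> Prop).

Lemma not_ball_incl_seq d U a :
  ~ (exists r, 0 < r /\ forall y, d a y < r -> U y) ->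
  exists y : nat -> X, forall k, d a (y k) < / (INR k + 1) /\ ~ U (y k).
Proof.
  intros Hnot. apply (choice (fun k y => d a y < / (INR k + 1) /\ ~ U y)). intro k.
  apply NNPP. intro Hall. apply Hnot. exists (/ (INR k + 1)). split.
  - apply Rinv_0_lt_compat. pose proof (pos_INR k). lra.
  - intros y Hy. apply NNPP. intro HUy. apply Hall. eauto.
Qed.

Lemma metric_open_of_conv_stat d1 d2 :
  is_metric d1 -> is_metric d2 ->
  (forall x, metric_convergent d2 x -> stat_convergent d1 x) ->
  forall U, metric_open d1 U -> metric_open d2 U.
Proof.
  intros H1 H2 Hconv U HU a Ua. destruct (HU a Ua) as [r [Hr Hball]].
  apply NNPP. intro Hnot. destruct (not_ball_incl_seq d2 U a Hnot) as [y Hy].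
  assert (Hfar : forall k, r <= d1 a (y k)).
  { intro k. destruct (Rle_dec r (d1 a (y k))) as [|Hlt]; [assumption|].
    exfalso. apply (proj2 (Hy k)), Hball. lra. }
  apply (interleave_not_stat_convergent X d1 H1 a y r Hr Hfar), Hconv.
  exists a. apply interleave_conv_to; [exact H2|]. intro k. apply Hy.
Qed.

Lemma metric_open_ball d a e : is_metric d -> metric_open d (fun y => d a y < e).
Proof.
  intros [_ [_ [_ Htri]]] x Hx. exists (e - d a x). split; [lra|].
  intros y Hy. pose proof (Htri a x y). lra.
Qed.

Lemma ball_incl_of_open_incl d1 d2 :
  is_metric d1 -> is_metric d2 ->
  (forall U, metric_open d2 U -> metric_open d1 U) ->
  forall a e, 0 < e -> exists r, 0 < r /\ forall y, d1 y a < r -> d2 y a < e.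
Proof.
  intros [_ [_ [Hsym1 _]]] H2 Hopen a e He.
  destruct (Hopen _ (metric_open_ball d2 a e H2) a) as [r [Hr Hball]].
  - destruct H2 as [_ [Hzero _]]. rewrite (proj2 (Hzero a a) eq_refl). exact He.
  - destruct H2 as [_ [_ [Hsym2 _]]].
    exists r. split; [exact Hr|]. intros y Hy.
    rewrite Hsym2. apply Hball. rewrite Hsym1. exact Hy.
Qed.

Lemma metric_conv_to_of_open_incl d1 d2 x a :
  is_metric d1 -> is_metric d2 ->
  (forall U, metric_open d2 U -> metric_open d1 U) ->
  metric_conv_to d1 x a -> metric_conv_to d2 x a.
Proof.
  intros H1 H2 Hopen Hx e He.
  destruct (ball_incl_of_open_incl d1 d2 H1 H2 Hopen a e He) as [r [Hr Hball]].
  destruct (Hx r Hr) as [N HN]. exists N. intros n Hn. apply Hball, HN, Hn.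
Qed.

Lemma stat_conv_to_of_open_incl d1 d2 x a :
  is_metric d1 -> is_metric d2 ->
  (forall U, metric_open d2 U -> metric_open d1 U) ->
  stat_conv_to d1 x a -> stat_conv_to d2 x a.
Proof.
  intros H1 H2 Hopen Hx e He.
  destruct (ball_incl_of_open_incl d1 d2 H1 H2 Hopen a e He) as [r [Hr Hball]].
  apply Un_cv_0_squeeze with (fun n => INR (bad_count d1 x a r n) / INR n);
    [|exact (Hx r Hr)].
  intro n. split; [apply INR_div_ge0|]. apply INR_div_le, bad_count_mono.
  intros k Hk. destruct (Rle_dec r (d1 (x k) a)) as [|Hlt]; [assumption|].
  pose proof (Hball (x k) ltac:(lra)). lra.
Qed.

Lemma stat_convergent_iff_same_topology d1 d2 :
  is_metric d1 -> is_metric d2 ->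
  (forall x, stat_convergent d1 x <-> stat_convergent d2 x) <-> same_topology d1 d2.
Proof.
  intros H1 H2. split.
  - intros Hstat U. split; apply metric_open_of_conv_stat; try assumption;
      intros x [a Ha]; apply Hstat; exists a; apply metric_conv_to_stat_conv_to, Ha.
  - intros Htop x. split; intros [a Ha]; exists a.
    + exact (stat_conv_to_of_open_incl d1 d2 x a H1 H2 (fun U => proj2 (Htop U)) Ha).
    + exact (stat_conv_to_of_open_incl d2 d1 x a H2 H1 (fun U => proj1 (Htop U)) Ha).
Qed.

Lemma metric_convergent_iff_same_topology d1 d2 :
  is_metric d1 -> is_metric d2 ->
  (forall x, metric_convergent d1 x <-> metric_convergent d2 x) <-> same_topology d1 d2.
Proof.
  intros H1 H2. split.
  - intros Hconv U. split; apply metric_open_of_conv_stat; try assumption;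
      intros x Hx; apply Hconv in Hx; destruct Hx as [a Ha];
      exists a; apply metric_conv_to_stat_conv_to, Ha.
  - intros Htop x. split; intros [a Ha]; exists a.
    + exact (metric_conv_to_of_open_incl d1 d2 x a H1 H2 (fun U => proj2 (Htop U)) Ha).
    + exact (metric_conv_to_of_open_incl d2 d1 x a H2 H1 (fun U => proj1 (Htop U)) Ha).
Qed.

End Topology.

Theorem theorem2 (X : Type) (d1 d2 : X -> X -> R)
  (H1 : is_metric d1) (H2 : is_metric d2) :
  ((forall x : nat -> X, stat_convergent d1 x <-> stat_convergent d2 x) <->
   (forall x : nat -> X, metric_convergent d1 x <-> metric_convergent d2 x)) /\
  ((forall x : nat -> X, metric_convergent d1 x <-> metric_convergent d2 x) <->
   same_topology d1 d2).
Proof.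
  rewrite (stat_convergent_iff_same_topology X d1 d2 H1 H2),
          (metric_convergent_iff_same_topology X d1 d2 H1 H2).
  tauto.
Qed.
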